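(* Let $k\ge 2$. If $G$ is a finite simple graph admitting a closed neighborhood balanced $k$-coloring and $H$ is any finite simple graph, then the strong product $G\boxtimes H$ admits a closed neighborhood balanced $k$-coloring.
   Context: For a vertex $v$, $N[v]=\{v\}\cup\{u : uv\in E\}$. A closed neighborhood balanced $k$-coloring of a graph is a map $c: V\to\{1,\dots,k\}$ such that for every vertex $v$ the numbers $|\{u\in N[v] : c(u)=i\}|$, $i=1,\dots,k$, are all equal. The strong product $G\boxtimes H$ has vertex set $V(G)\times V(H)$, with $(g,h)$ adjacent to $(g',h')$ iff ($g=g'$ and $hh'\in E(H)$) or ($h=h'$ and $gg'\in E(G)$) or ($gg'\in E(G)$ and $hh'\in E(H)$). *)

From mathcomp Require Import all_boot.
Set Implicit Arguments. Unset Strict Implicit. Unset Printing Implicit Defensive.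

Definition simple_graph (T : finType) (e : rel T) : Prop :=
  symmetric e /\ irreflexive e.

Definition closed_nbhd (T : finType) (e : rel T) (v : T) : {set T} :=
  v |: [set u | e v u].

Definition cnb_coloring (T : finType) (e : rel T) (k : nat) (c : T -> 'I_k) : Prop :=
  forall (v : T) (i j : 'I_k),
    #|[set u in closed_nbhd e v | c u == i]| = #|[set u in closed_nbhd e v | c u == j]|.

Definition has_cnb_coloring (T : finType) (e : rel T) (k : nat) : Prop :=
  exists c : T -> 'I_k, cnb_coloring e c.

Definition strong_prod (T1 T2 : finType) (e1 : rel T1) (e2 : rel T2) : rel (T1 * T2) :=
  fun x y =>
    [|| (x.1 == y.1) && e2 x.2 y.2,
        (x.2 == y.2) && e1 x.1 y.1
      | e1 x.1 y.1 && e2 x.2 y.2].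

From mathcomp Require Import all_boot.

(* The closed neighbourhood of (g, h) in the strong product is N[g] x N[h].
   Colouring (g, h) with the colour of g, the colour-i vertices of N[(g, h)]
   are (colour-i vertices of N[g]) x N[h], so every colour class has size
   |N[h]| times a number independent of i. *)

Section StrongProduct.

Variables (T1 T2 : finType) (e1 : rel T1) (e2 : rel T2).

Lemma closed_nbhd_strong_prod (v : T1 * T2) :
  closed_nbhd (strong_prod e1 e2) v =
  setX (closed_nbhd e1 v.1) (closed_nbhd e2 v.2).
Proof.
case: v => g h; apply/setP => -[a b].
rewrite !inE /strong_prod xpair_eqE /= [g == a]eq_sym [h == b]eq_sym.
by case: (a == g); case: (b == h); case: (e1 g a); case: (e2 h b).
Qed.

Lemma cnb_coloring_strong_prod (k : nat) (c : T1 -> 'I_k) :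
  cnb_coloring e1 c -> cnb_coloring (strong_prod e1 e2) (fun u => c u.1).
Proof.
move=> balanced v i j.
have colour_class l : [set u in closed_nbhd (strong_prod e1 e2) v | c u.1 == l]
    = setX [set x in closed_nbhd e1 v.1 | c x == l] (closed_nbhd e2 v.2).
  by apply/setP => -[a b]; rewrite closed_nbhd_strong_prod !inE /= andbAC.
by rewrite !colour_class !cardsX (balanced v.1 i j).
Qed.

End StrongProduct.

Theorem theorem2p18 (k : nat) (T1 T2 : finType) (e1 : rel T1) (e2 : rel T2) :
  2 <= k ->
  simple_graph e1 -> simple_graph e2 ->
  has_cnb_coloring e1 k ->
  has_cnb_coloring (strong_prod e1 e2) k.
Proof.
move=> _ _ _ [c balanced].
by exists (fun u => c u.1); apply: cnb_coloring_strong_prod.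
Qed.
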